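(* Let $\Omega\subset\mathbb{R}^n$ be open, $\omega$ a weight, $1\le p<q<\infty$, $a\in L^\infty(\Omega)$ non-negative, and $\varphi(x,t)=t^p+a(x)t^q$. Then $\varphi$ satisfies (A0), (A2)$_\omega$ and (Inc)$_p$.
   Context: A weight is a nonnegative locally integrable function $\omega$ on $\mathbb{R}^n$; $L^1(\Omega,\omega)$ is the set of measurable $h$ with $\int_\Omega|h|\omega\,dx<\infty$. (A0): there is $\beta_0\in(0,1]$ with $\varphi(x,\beta_0)\le1\le\varphi(x,1/\beta_0)$ for a.e. $x\in\Omega$. (A2)$_\omega$: for every $s>0$ there exist $\beta_2\in(0,1]$ and $h\in L^1(\Omega,\omega)\cap L^\infty(\Omega)$, $h\ge0$, such that $\varphi(x,\beta_2t)\le\varphi(y,t)+h(x)+h(y)$ for a.e. $x,y\in\Omega$ whenever $\varphi(y,t)\in[0,s]$. (Inc)$_p$: for a.e. $x$, $t\mapsto\varphi(x,t)/t^p$ is increasing on $(0,\infty)$. *)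

From mathcomp Require Import all_boot all_order all_algebra.
From mathcomp Require Import all_classical all_reals all_analysis.
Set Implicit Arguments.
Unset Strict Implicit.
Unset Printing Implicit Defensive.
Import Order.TTheory GRing.Theory Num.Theory.
Import numFieldNormedType.Exports.
Local Open Scope ring_scope.
Local Open Scope classical_set_scope.

(* R^n is modelled as n.-tuple R, carrying the product (= Borel) sigma-algebra
   of mathcomp-analysis (measure_tuple_display). *)
Definition tup2rV {R : realType} {n : nat} (x : n.-tuple R) : 'rV[R]_n :=
  \row_i tnth x i.

Definition Rn_open {R : realType} {n : nat} (O : set (n.-tuple R)) : Prop :=
  @open 'rV[R]_n (tup2rV @` O).

Definition Rn_compact {R : realType} {n : nat} (K : set (n.-tuple R)) : Prop :=
  @compact 'rV[R]_n (tup2rV @` K).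

Definition Rn_box {R : realType} {n : nat} (a b : n.-tuple R) : set (n.-tuple R) :=
  [set x | forall i : 'I_n, tnth a i < tnth x i <= tnth b i].

(* mu is the n-dimensional Lebesgue measure (on Borel sets): it gives every
   box its volume.  Such a measure exists and is unique. *)
Definition is_lebesgue_Rn {R : realType} {n : nat}
  (mu : {measure set (n.-tuple R) -> \bar R}) : Prop :=
  forall a b : n.-tuple R,
    mu (Rn_box a b) = (\prod_(i < n) Num.max (tnth b i - tnth a i) 0)%:E.

(* Lebesgue measurability of f on D: f agrees a.e. on D with a Borel function. *)
Definition Lmeasurable {R : realType} {n : nat}
  (mu : {measure set (n.-tuple R) -> \bar R}) (D : set (n.-tuple R))
  (f : n.-tuple R -> R) : Prop :=
  exists g : n.-tuple R -> R, measurable_fun D g /\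
    {ae mu, forall x, D x -> f x = g x}.

Definition is_weight {R : realType} {n : nat}
  (mu : {measure set (n.-tuple R) -> \bar R}) (w : n.-tuple R -> R) : Prop :=
  (forall x, 0 <= w x) /\
  exists g : n.-tuple R -> R, measurable_fun setT g /\
    {ae mu, forall x, w x = g x} /\
    forall K, Rn_compact K -> (\int[mu]_(x in K) (`|g x|)%:E < +oo)%E.

Definition in_Linfty {R : realType} {n : nat}
  (mu : {measure set (n.-tuple R) -> \bar R}) (D : set (n.-tuple R))
  (f : n.-tuple R -> R) : Prop :=
  Lmeasurable mu D f /\ exists M : R, {ae mu, forall x, D x -> `|f x| <= M}.

Definition in_L1w {R : realType} {n : nat}
  (mu : {measure set (n.-tuple R) -> \bar R}) (D : set (n.-tuple R))
  (w f : n.-tuple R -> R) : Prop :=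
  Lmeasurable mu D f /\
  exists g : n.-tuple R -> R, measurable_fun D g /\
    {ae mu, forall x, D x -> g x = `|f x| * w x} /\
    (\int[mu]_(x in D) (g x)%:E < +oo)%E.

Definition cond_A0 {R : realType} {n : nat}
  (mu : {measure set (n.-tuple R) -> \bar R}) (D : set (n.-tuple R))
  (phi : n.-tuple R -> R -> R) : Prop :=
  exists b0 : R, 0 < b0 <= 1 /\
    {ae mu, forall x, D x -> phi x b0 <= 1 <= phi x b0^-1}.

Definition cond_A2w {R : realType} {n : nat}
  (mu : {measure set (n.-tuple R) -> \bar R}) (D : set (n.-tuple R))
  (w : n.-tuple R -> R) (phi : n.-tuple R -> R -> R) : Prop :=
  forall s : R, 0 < s ->
  exists b2 : R, 0 < b2 <= 1 /\
  exists h : n.-tuple R -> R,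
    in_L1w mu D w h /\ in_Linfty mu D h /\ (forall x, D x -> 0 <= h x) /\
    exists N : set (n.-tuple R), mu.-negligible N /\
      forall x y, D x -> D y -> ~ N x -> ~ N y ->
      forall t : R, 0 <= t -> 0 <= phi y t <= s ->
        phi x (b2 * t) <= phi y t + h x + h y.

Definition cond_Inc {R : realType} {n : nat}
  (mu : {measure set (n.-tuple R) -> \bar R}) (D : set (n.-tuple R))
  (phi : n.-tuple R -> R -> R) (p : R) : Prop :=
  {ae mu, forall x, D x -> forall s t : R, 0 < s -> s <= t ->
     phi x s / s `^ p <= phi x t / t `^ p}.

From mathcomp Require Import all_boot all_order all_algebra.
From mathcomp Require Import all_classical all_reals all_analysis.
From mathcomp Require Import ring lra.

Set Implicit Arguments.
Unset Strict Implicit.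
Unset Printing Implicit Defensive.
Import Order.TTheory GRing.Theory Num.Theory.
Import numFieldNormedType.Exports.
Local Open Scope ring_scope.
Local Open Scope classical_set_scope.

(* Since a is essentially bounded, say 0 <= a <= K, every phi(x, .) lies
   between t^p and t^p + K t^q.  On the range phi(y, t) <= s we have
   t^q <= (1 + s^(q-p)) t^p, so all the phi(x, .) are comparable to t^p there,
   uniformly in x; a fixed rescaling of t then gives (A2) with h = 0, and
   the same rescaling at t = 1 gives (A0).  Finally phi(x, t) / t^p is
   1 + a(x) t^(q-p), which is nondecreasing because q > p. *)

Lemma powR_split (R : realType) (p q t : R) :
  0 < t -> t `^ q = t `^ p * t `^ (q - p).
Proof.
by move=> t_gt0; rewrite -powRD ?(gt_eqF t_gt0) ?implybT // addrC subrK.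
Qed.

Section DoublePhase.
Variables (R : realType) (p q : R).
Hypotheses (p_ge1 : 1 <= p) (p_lt_q : p < q).

Let p_gt0 : 0 < p := lt_le_trans ltr01 p_ge1.
Let qp_ge0 : 0 <= q - p := ltW (etrans (subr_gt0 p q) p_lt_q).
Let q_ge1 : 1 <= q := le_trans p_ge1 (ltW p_lt_q).

Definition double_phase (a t : R) : R := t `^ p + a * t `^ q.

Lemma double_phase_le_coef (a K t : R) :
  a <= K -> double_phase a t <= double_phase K t.
Proof. by move=> aK; rewrite lerD2l ler_wpM2r ?powR_ge0. Qed.

Lemma double_phase_scale (a b t : R) : 0 <= a -> 0 < b <= 1 -> 0 <= t ->
  double_phase a (b * t) <= b * double_phase a t.
Proof.
move=> a_ge0 b01 t_ge0; have /andP[b_gt0 _] := b01.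
rewrite /double_phase !powRM ?(ltW b_gt0) //.
have bp : b `^ p <= b by exact: ge1r_powR.
have bq : b `^ q <= b by exact: ge1r_powR.
rewrite mulrDr [b * (a * _)]mulrCA.
by rewrite lerD ?ler_wpM2l ?ler_wpM2r ?powR_ge0.
Qed.

Lemma powR_gap_le (s t : R) : 0 <= t -> t `^ p <= s ->
  t `^ q <= (1 + s `^ (q - p)) * t `^ p.
Proof.
rewrite le_eqVlt => /predU1P[<- _|t_gt0 ts].
  by rewrite !powR0 ?mulr0 // gt_eqF // (lt_trans p_gt0).
have gap : t `^ (q - p) <= 1 + s `^ (q - p).
  have [t_le1|t_gt1] := leP t 1.
    have : t `^ (q - p) <= 1 `^ (q - p).
      by apply: ge0_ler_powR; rewrite ?nnegrE //; lra.
    by rewrite powR1; have := powR_ge0 s (q - p); lra.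
  have t_le_s : t <= s.
    by apply: le_trans ts; apply: le1r_powR => //; exact: ltW.
  have : t `^ (q - p) <= s `^ (q - p).
    by apply: ge0_ler_powR; rewrite ?nnegrE //; lra.
  lra.
by rewrite (powR_split p q) // mulrC ler_wpM2r ?powR_ge0.
Qed.

Lemma double_phase_le_lower (K s t : R) : 0 <= K -> 0 <= t -> t `^ p <= s ->
  double_phase K t <= (1 + K) * (1 + s `^ (q - p)) * t `^ p.
Proof.
move=> K_ge0 t_ge0 ts; rewrite /double_phase.
have := powR_gap_le t_ge0 ts; have := powR_ge0 s (q - p).
have := powR_ge0 t p; nra.
Qed.

Lemma double_phase_A0 (K a : R) : 0 <= a <= K ->
  double_phase a (1 + K)^-1 <= 1 <= double_phase a (1 + K).
Proof.
move=> /andP[a_ge0 aK]; have K1_gt0 : 0 < 1 + K by lra.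
apply/andP; split.
  have b01 : 0 < (1 + K)^-1 <= 1 by rewrite invr_gt0 invf_le1 ?K1_gt0; lra.
  have := double_phase_scale a_ge0 b01 ler01.
  rewrite mulr1 /double_phase !powR1 mulr1 => /le_trans; apply.
  by rewrite ler_pdivrMl // mulr1 lerD2l.
have K1p : 1 + K <= (1 + K) `^ p by apply: le1r_powR => //; lra.
rewrite /double_phase; have := powR_ge0 (1 + K) q; nra.
Qed.

Lemma double_phase_A2 (K s a a' t : R) :
  0 <= a <= K -> 0 <= a' -> 0 <= t -> double_phase a' t <= s ->
  double_phase a (((1 + K) * (1 + s `^ (q - p)))^-1 * t) <= double_phase a' t.
Proof.
move=> /andP[a_ge0 aK] a'_ge0 t_ge0 phi_le_s.
set C := (1 + K) * (1 + s `^ (q - p)).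
have C_ge1 : 1 <= C by rewrite /C; have := powR_ge0 s (q - p); nra.
have b01 : 0 < C^-1 <= 1 by rewrite invr_gt0 invf_le1; lra.
have ts : t `^ p <= s.
  by apply: le_trans phi_le_s; rewrite lerDl mulr_ge0 ?powR_ge0.
apply: le_trans (double_phase_scale a_ge0 b01 t_ge0) _.
rewrite ler_pdivrMl; last lra.
apply: le_trans (double_phase_le_coef t aK) _.
apply: le_trans (double_phase_le_lower (le_trans a_ge0 aK) t_ge0 ts) _.
rewrite -/C; apply: ler_wpM2l; first lra.
by rewrite /double_phase lerDl mulr_ge0 ?powR_ge0.
Qed.

Lemma double_phase_divp (a t : R) : 0 < t ->
  double_phase a t / t `^ p = 1 + a * t `^ (q - p).
Proof.
move=> t_gt0; have tp_neq0 : t `^ p != 0 by rewrite gt_eqF ?powR_gt0.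
by rewrite /double_phase (powR_split p q) //; field.
Qed.

Lemma double_phase_Inc (a s t : R) : 0 <= a -> 0 < s -> s <= t ->
  double_phase a s / s `^ p <= double_phase a t / t `^ p.
Proof.
move=> a_ge0 s_gt0 st.
rewrite !double_phase_divp ?(lt_le_trans s_gt0) // lerD2l ler_wpM2l //.
by apply: ge0_ler_powR; rewrite ?nnegrE //; lra.
Qed.

End DoublePhase.

Section FunctionClasses.
Variables (R : realType) (n : nat) (mu : {measure set (n.-tuple R) -> \bar R}).
Variable D : set (n.-tuple R).

Lemma Lmeasurable_cst0 : Lmeasurable mu D (fun=> 0).
Proof. by exists (fun=> 0); split; [exact: measurable_cst|exact: aeW]. Qed.

Lemma in_Linfty_cst0 : in_Linfty mu D (fun=> 0).
Proof.
split; first exact: Lmeasurable_cst0.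
by exists 0; apply: aeW => x _; rewrite normr0.
Qed.

Lemma in_L1w_cst0 (w : n.-tuple R -> R) : in_L1w mu D w (fun=> 0).
Proof.
split; first exact: Lmeasurable_cst0.
exists (fun=> 0); split; first exact: measurable_cst.
split; first by apply: aeW => x _; rewrite normr0 mul0r.
by rewrite integral0 ltry.
Qed.

Lemma in_Linfty_ge0_bounded (a : n.-tuple R -> R) : in_Linfty mu D a ->
  {ae mu, forall x, D x -> 0 <= a x} ->
  exists2 K : R, 0 <= K & {ae mu, forall x, D x -> 0 <= a x <= K}.
Proof.
case=> _ [M aM] a_ge0; exists `|M|; first exact: normr_ge0.
apply: filterS (filterI aM a_ge0) => x [xM x_ge0] Dx.
rewrite x_ge0 //= (le_trans (ler_norm _)) //.
exact: le_trans (xM Dx) (ler_norm M).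
Qed.

End FunctionClasses.

Section Conditions.
Variables (R : realType) (n : nat) (mu : {measure set (n.-tuple R) -> \bar R}).
Variables (D : set (n.-tuple R)) (p q : R) (a : n.-tuple R -> R).
Hypotheses (p_ge1 : 1 <= p) (p_lt_q : p < q).

Let phi (x : n.-tuple R) (t : R) : R := double_phase p q (a x) t.

Lemma cond_A0_double_phase (K : R) : 0 <= K ->
  {ae mu, forall x, D x -> 0 <= a x <= K} -> cond_A0 mu D phi.
Proof.
move=> K_ge0 aK; exists (1 + K)^-1; split.
  by rewrite invr_gt0 invf_le1; lra.
by apply: filterS aK => x aKx Dx; rewrite invrK double_phase_A0 ?aKx.
Qed.

Lemma cond_A2w_double_phase (w : n.-tuple R -> R) (K : R) : 0 <= K ->
  {ae mu, forall x, D x -> 0 <= a x <= K} -> cond_A2w mu D w phi.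
Proof.
move=> K_ge0 aK s _.
exists ((1 + K) * (1 + s `^ (q - p)))^-1; split.
  by rewrite invr_gt0 invf_le1; have := powR_ge0 s (q - p); nra.
exists (fun=> 0); split; first exact: in_L1w_cst0.
split; first exact: in_Linfty_cst0.
split=> //; exists (~` [set x | D x -> 0 <= a x <= K]); split=> //.
move=> x y Dx Dy /contrapT/(_ Dx) aKx /contrapT/(_ Dy)/andP[ay_ge0 _].
move=> t t_ge0 /andP[_ phi_le_s]; rewrite !addr0.
exact: double_phase_A2.
Qed.

Lemma cond_Inc_double_phase :
  {ae mu, forall x, D x -> 0 <= a x} -> cond_Inc mu D phi p.
Proof.
apply: filterS => x a_ge0 Dx s t; exact/double_phase_Inc/a_ge0.
Qed.

End Conditions.

Theorem lemma5p8 (R : realType) (n : nat)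
  (mu : {measure set (n.-tuple R) -> \bar R}) (Hmu : is_lebesgue_Rn mu)
  (Omega : set (n.-tuple R)) (HOmega : Rn_open Omega)
  (w : n.-tuple R -> R) (Hw : is_weight mu w)
  (p q : R) (Hp : 1 <= p) (Hpq : p < q)
  (a : n.-tuple R -> R) (Ha : in_Linfty mu Omega a)
  (Ha0 : {ae mu, forall x, Omega x -> 0 <= a x}) :
  let phi := fun (x : n.-tuple R) (t : R) => t `^ p + a x * t `^ q in
  cond_A0 mu Omega phi /\ cond_A2w mu Omega w phi /\ cond_Inc mu Omega phi p.
Proof.
move=> phi; have [K K_ge0 aK] := in_Linfty_ge0_bounded Ha Ha0.
split; first exact (cond_A0_double_phase Hp Hpq K_ge0 aK).
split; first exact (cond_A2w_double_phase Hp Hpq w K_ge0 aK).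
exact (cond_Inc_double_phase Hpq Ha0).
Qed.
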